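(* Let $n\geq 2$ and let $\mathcal{G}=(\mathcal{V},\mathcal{E})$ be a directed graph on $\mathcal{V}=\{1,\ldots,n\}$ in which every node has at least one outgoing edge, with hyperlink matrix $A$, let $m\in(0,1)$, let $x^*$ be the PageRank vector, and let $Q=(1-m)A$. Let $\mathcal{V}_1,\ldots,\mathcal{V}_N$ ($1\leq N\leq n$) be a partition of $\mathcal{V}$ into nonempty groups of consecutive indices, $\mathcal{V}_1=\{1,\ldots,l_1\}$, $\mathcal{V}_2=\{l_1+1,\ldots,l_1+l_2\}$, $\ldots$, $\mathcal{V}_N=\{n-l_N+1,\ldots,n\}$, and partition $Q$ into blocks $\check{Q}_{hg}\in\mathbb{R}^{l_h\times l_g}$ ($h,g=1,\ldots,N$) accordingly; likewise write the state vectors as $x(k)=(\check{x}_1(k)^T,\ldots,\check{x}_N(k)^T)^T$ and $z(k)=(\check{z}_1(k)^T,\ldots,\check{z}_N(k)^T)^T$ with $\check{x}_h(k),\check{z}_h(k)\in\mathbb{R}^{l_h}$. Let $\{\psi(k)\}_{k\geq 0}$ be a sequence in $\{1,\ldots,N\}$ in which every group index appears infinitely many times. Consider the algorithm with $\check{x}_h(0)=\check{z}_h(0)=\frac{m}{n}\mathbf{1}_{l_h}$ for all $h$, and for $k\geq 0$ and each $h$, $$\check{x}_h(k+1)=\check{x}_h(k)+\check{Q}_{h\psi(k)}\big(I-\check{Q}_{\psi(k)\psi(k)}\big)^{-1}\check{z}_{\psi(k)}(k),$$ $$\check{z}_h(k+1)=\begin{cases}0&\text{if } h=\psi(k),\\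 \check{z}_h(k)+\check{Q}_{h\psi(k)}\big(I-\check{Q}_{\psi(k)\psi(k)}\big)^{-1}\check{z}_{\psi(k)}(k)&\text{otherwise.}\end{cases}$$ Then $x(k)\to x^*$ as $k\to\infty$. If, in addition, there is $T>0$ such that every group index appears among $\psi(k),\ldots,\psi(k+T-1)$ for every $k\geq 0$, then the convergence is exponential, i.e., there exist $C>0$ and $\rho\in(0,1)$ with $\|x(k)-x^*\|\leq C\rho^k$ for all $k\geq 0$.
   Context: Write $(i,j)\in\mathcal{E}$ if page $i$ has a link to page $j$. $\mathcal{L}_j^{\text{out}}=\{i:(j,i)\in\mathcal{E}\}$ and $n_j=|\mathcal{L}_j^{\text{out}}|\geq 1$. The hyperlink matrix $A=(a_{ij})$ is defined by $a_{ij}=1/n_j$ if $i\in\mathcal{L}_j^{\text{out}}$ and $a_{ij}=0$ otherwise (column stochastic). The PageRank vector $x^*$ satisfies $x^*=(1-m)Ax^*+\frac{m}{n}\mathbf{1}_n$ and $\mathbf{1}_n^Tx^*=1$. Each diagonal block $\check{Q}_{hh}$ is a nonnegative principal submatrix of the Schur stable matrix $Q$, so $I-\check{Q}_{hh}$ is invertible. (Pages are assumed indexed so that groups are consecutive blocks.) *)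

From HB Require Import structures.
From mathcomp Require Import all_boot all_order all_algebra.
From mathcomp Require Import all_classical all_reals all_analysis.
Set Implicit Arguments. Unset Strict Implicit. Unset Printing Implicit Defensive.
Import Order.TTheory GRing.Theory Num.Theory.
Local Open Scope ring_scope.

(* Out-neighbours of page j: L_j^out = {i : (j,i) in E}; E j i means "j links to i". *)
Definition outdeg (n : nat) (E : rel 'I_n) (j : 'I_n) : nat := #|[set i | E j i]|.

Definition hyperlink (R : realType) (n : nat) (E : rel 'I_n) : 'M[R]_n :=
  \matrix_(i, j) (if E j i then (outdeg E j)%:R^-1 else 0).

Definition is_pagerank (R : realType) (n : nat) (E : rel 'I_n) (m : R)
    (x : 'cV[R]_n) : Prop :=
  x = (1 - m) *: (hyperlink R E *m x) + const_mx (m / n%:R)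
  /\ \sum_(i < n) x i 0 = 1.

Definition blk_update (R : realType) (N : nat) (l : 'I_N -> nat)
    (Q : 'M[R]_(\sum_(h < N) l h)) (z : 'cV[R]_(\sum_(h < N) l h))
    (g h : 'I_N) : 'cV[R]_(l h) :=
  submxblock Q h g *m invmx (1%:M - submxblock Q g g) *m submxcol z g.

From HB Require Import structures.
From mathcomp Require Import all_boot all_order all_algebra.
From mathcomp Require Import all_classical all_reals all_analysis.
From mathcomp Require Import ring lra zify.
Set Implicit Arguments. Unset Strict Implicit. Unset Printing Implicit Defensive.
Import Order.TTheory GRing.Theory Num.Theory.
Import numFieldNormedType.Exports.
Local Open Scope ring_scope.

(* Write Q = (1 - m) A: it is nonnegative with column sums 1 - m < 1, so each
   I - Q_gg is invertible with a nonnegative inverse. The residual z(k) stays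
   nonnegative and the invariant (I - Q)(x* - x(k)) = Q z(k) holds, whence
   |x(k) - x*| <= ((1 - m) / m) * sum_i z_i(k). Updating block g zeroes z_g and
   adds Q_{.g} (I - Q_gg)^{-1} z_g to the other blocks: this destroys at least a
   fraction m of the mass of block g and never decreases the residual of another
   block. So the total residual mass contracts by the factor 1 - m over every
   window in which all blocks are updated; it tends to 0 when every block
   recurs, and geometrically, at a rate rho with 1 - m <= rho ^ T, when all
   blocks are updated within every T consecutive steps. *)

Lemma normr_le_sum_cV (R : realFieldType) p (v : 'cV[R]_p) : `|v| <= \sum_i `|v i 0|.
Proof.
rewrite [leLHS]mx_normrE; apply: bigmax_le => [|[i j] _]; first exact: sumr_ge0.
by rewrite ord1 /= (bigD1 i) //= lerDl sumr_ge0.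
Qed.

Section NonnegativeContraction.
Variables (R : realFieldType) (p : nat) (P : 'M[R]_p) (c : R).
Hypothesis P_ge0 : forall i j, 0 <= P i j.
Hypothesis P_colsum : forall j, \sum_i P i j <= c.

Lemma sum_mulmx_le (v : 'cV[R]_p) : (forall i, 0 <= v i 0) ->
  \sum_i (P *m v) i 0 <= c * \sum_i v i 0.
Proof.
move=> v_ge0; under eq_bigr do rewrite mxE.
rewrite exchange_big mulr_sumr; apply: ler_sum => j _.
by rewrite -mulr_suml ler_wpM2r.
Qed.

Lemma subinvariant_sum_le (w y : 'cV[R]_p) :
  (forall i, 0 <= w i 0) -> (forall i, 0 <= y i 0) ->
  (forall i, w i 0 <= (P *m (w + y)) i 0) ->
  (1 - c) * \sum_i w i 0 <= c * \sum_i y i 0.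
Proof.
move=> w_ge0 y_ge0 w_le.
have wy_ge0 i : 0 <= (w + y) i 0 by rewrite mxE addr_ge0.
have := le_trans (ler_sum _ (fun i _ => w_le i)) (sum_mulmx_le wy_ge0).
under [X in _ <= c * X]eq_bigr do rewrite mxE.
rewrite big_split /=; lra.
Qed.

Lemma sum_norm_1B_le (e z : 'cV[R]_p) :
  (1%:M - P) *m e = P *m z -> (forall i, 0 <= z i 0) ->
  (1 - c) * \sum_i `|e i 0| <= c * \sum_i z i 0.
Proof.
move=> e_eq z_ge0.
have e_fix : e = P *m (e + z).
  by apply/eqP; rewrite mulmxDr -subr_eq -e_eq mulmxBl mul1mx opprB addrC subrK.
pose w := map_mx (fun a => `|a|) e.
have w_ge0 i : 0 <= w i 0 by rewrite mxE.
have := @subinvariant_sum_le w z w_ge0 z_ge0.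
under eq_bigr do rewrite mxE; apply=> i.
rewrite mxE {1}e_fix !mxE; apply: le_trans (ler_norm_sum _ _ _) _.
apply: ler_sum => j _; rewrite normrM ger0_norm // !mxE ler_wpM2l //.
by apply: le_trans (ler_normD _ _) _; rewrite (ger0_norm (z_ge0 j)).
Qed.

Hypothesis c_lt1 : c < 1.

Lemma subinvariant_eq0 (w : 'cV[R]_p) :
  (forall i, 0 <= w i 0) -> (forall i, w i 0 <= (P *m w) i 0) -> w = 0.
Proof.
move=> w_ge0 w_le.
have zero_ge0 i : 0 <= (0 : 'cV[R]_p) i 0 by rewrite mxE.
have := subinvariant_sum_le w_ge0 zero_ge0.
rewrite addr0 => /(_ w_le).
rewrite [X in _ <= _ * X]big1 => [|i _]; last by rewrite mxE.
rewrite mulr0 pmulr_rle0 ?subr_gt0 // => sum_le0.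
have sum0 : \sum_i w i 0 = 0 by apply/eqP; rewrite eq_le sum_le0 sumr_ge0.
apply/matrixP => i j; rewrite ord1 mxE.
exact: (psumr_eq0P (fun i _ => w_ge0 i) sum0).
Qed.

Lemma fixpoint_eq0 (v : 'cV[R]_p) : v = P *m v -> v = 0.
Proof.
move=> v_fix; pose w := map_mx (fun a => `|a|) v.
have w_ge0 i : 0 <= w i 0 by rewrite mxE.
have w_le i : w i 0 <= (P *m w) i 0.
  rewrite mxE {1}v_fix !mxE; apply: le_trans (ler_norm_sum _ _ _) _.
  by apply: ler_sum => j _; rewrite normrM ger0_norm // mxE.
have /matrixP w0 := subinvariant_eq0 w_ge0 w_le.
apply/matrixP => i j; rewrite ord1 mxE; apply/normr0_eq0.
by have := w0 i 0; rewrite !mxE.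
Qed.

Lemma unitmx_1B : 1%:M - P \in unitmx.
Proof.
rewrite -unitmx_tr unitmxE unitfE; apply/negP => /det0P[v v_neq0 v_ker].
have : v^T = P *m v^T.
  apply/eqP; rewrite -subr_eq0 -{1}[v^T]mul1mx -mulmxBl.
  by rewrite -[_ *m _]trmxK trmx_mul trmxK v_ker trmx0.
move=> /fixpoint_eq0 /(congr1 trmx); rewrite trmxK trmx0 => v0.
by rewrite v0 eqxx in v_neq0.
Qed.

Lemma invmx_1B_ge0 (b : 'cV[R]_p) : (forall i, 0 <= b i 0) ->
  forall i, 0 <= (invmx (1%:M - P) *m b) i 0.
Proof.
move=> b_ge0; set u := invmx _ *m b.
have u_fix : u = b + P *m u.
  apply/eqP; rewrite -subr_eq -{1}[u]mul1mx -mulmxBl /u mulmxA.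
  by rewrite mulmxV ?mul1mx // unitmx_1B.
clearbody u.
(* The negative part of the solution is subinvariant, hence zero. *)
pose w := map_mx (fun a => Num.max 0 (- a)) u.
suff /matrixP w0 : w = 0.
  move=> i; have := w0 i 0; rewrite !mxE => /eqP.
  by rewrite eq_le ge_max oppr_le0 => /andP[/andP[]].
apply: subinvariant_eq0 => [i|i]; first by rewrite mxE le_max lexx.
rewrite [w i 0]mxE ge_max; apply/andP; split.
  by rewrite mxE; apply: sumr_ge0 => j _; rewrite !mxE mulr_ge0 // le_max lexx.
have -> : - u i 0 = - b i 0 + (P *m - u) i 0 by rewrite {1}u_fix mulmxN !mxE opprD.
rewrite -[X in _ <= X]add0r lerD ?oppr_le0 // !mxE; apply: ler_sum => j _.
by rewrite !mxE ler_wpM2l // le_max lexx orbT.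
Qed.
End NonnegativeContraction.

Section Geometric.
Variable R : realType.

Lemma cvg_nonincreasing_bound (V : normedModType R) (u : nat -> V) (a : V)
    (s : R^nat) :
  nonincreasing_seq s -> (forall e, 0 < e -> exists K, s K <= e) ->
  (forall k, `|u k - a| <= s k) -> (u @ \oo --> a)%classic.
Proof.
move=> s_dec s_small u_le; apply/cvgrPdist_le => e e_gt0.
have [K sK] := s_small e e_gt0; exists K => // k /= K_le.
by rewrite distrC; apply: le_trans (u_le k) (le_trans (s_dec _ _ K_le) sK).
Qed.

Lemma exists_expr_mul_le (c a e : R) : 0 <= c < 1 -> 0 < e ->
  exists p, c ^+ p * a <= e.
Proof.
move=> /andP[c_ge0 c_lt1] e_gt0.
have : ((fun p => c ^+ p * a) @ \oo --> 0)%classic.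
  rewrite -(mul0r a); apply: cvgM; last exact: cvg_cst.
  by apply: cvg_expr; rewrite ger0_norm.
move=> /cvgrPdist_le /(_ e e_gt0) [p _ p_le]; exists p.
by have := p_le p (leqnn p); rewrite sub0r normrN; apply: le_trans; apply: ler_norm.
Qed.

Lemma exists_root_ge (c : R) T : 0 < c < 1 -> (0 < T)%N ->
  exists2 rho, 0 < rho < 1 & c <= rho ^+ T.
Proof.
move=> /andP[c_gt0 c_lt1] T_gt0; have T_gt0' : (0 : R) < T%:R by rewrite ltr0n.
set a := (1 - c) / T%:R.
have a_gt0 : 0 < a by rewrite divr_gt0 // subr_gt0.
have a_ge0 := ltW a_gt0.
have a_le : a <= 1 - c.
  by rewrite ler_pdivrMr // ler_peMr ?ler1n // subr_ge0 ltW.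
have bernoulli t : 1 - t%:R * a <= (1 - a) ^+ t.
  elim: t => [|t IH]; first by rewrite expr0 mul0r subr0.
  have a_le1 : 0 <= 1 - a by lra.
  have : 0 <= t%:R * a * a by apply: mulr_ge0 => //; apply: mulr_ge0.
  have := ler_wpM2l a_le1 IH; rewrite exprS -natr1; nra.
exists (1 - a); first by apply/andP; split; lra.
by apply: le_trans (bernoulli T); rewrite /a mulrC divfK ?gt_eqF //; lra.
Qed.

Lemma expr_divn_le (c rho : R) T k : 0 <= c -> 0 < rho <= 1 -> c <= rho ^+ T ->
  (0 < T)%N -> c ^+ (k %/ T) * rho ^+ T <= rho ^+ k.
Proof.
move=> c_ge0 /andP[rho_gt0 rho_le1] c_le T_gt0.
apply: le_trans (_ : rho ^+ (T * (k %/ T) + T) <= _); last first.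
  by apply: ler_wiXn2l => //; [exact: ltW | lia].
have rho_ge0 := ltW rho_gt0.
rewrite exprD exprM; apply: ler_wpM2r; first exact: exprn_ge0.
by apply: lerXn2r; rewrite // nnegrE exprn_ge0.
Qed.

End Geometric.

Section Blocks.
Import tagnat.
Variables (R : realType) (N : nat) (l : 'I_N -> nat).
Local Notation n := (\sum_(h < N) l h)%N.

Lemma sum_blocks (F : 'I_n -> R) :
  \sum_i F i = \sum_(g < N) \sum_(k < l g) F (Rank g k).
Proof.
rewrite sig_big_dep /= (reindex (@rank _ l)) /=.
  by apply: eq_bigr => -[g k] _; rewrite rankE.
by exists sig => s _; rewrite ?sigK ?rankK.
Qed.

Lemma sum_blk (F : 'I_n -> R) g :
  \sum_(i | sig1 i == g) F i = \sum_(k < l g) F (Rank g k).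
Proof.
rewrite big_mkcond /= sum_blocks (bigD1 g) //= [X in _ + X]big1 ?addr0.
  by apply: eq_bigr => k _; rewrite Rank1K eqxx.
by move=> h h_neq_g; apply: big1 => k _; rewrite Rank1K (negbTE h_neq_g).
Qed.

Lemma sum_blk_le (F : 'I_n -> R) g :
  (forall i, 0 <= F i) -> \sum_(k < l g) F (Rank g k) <= \sum_i F i.
Proof.
move=> F_ge0; rewrite -sum_blk [leRHS](bigID (fun i => sig1 i == g)) /=.
by rewrite lerDl sumr_ge0.
Qed.

Definition blk_mask g (w : 'cV[R]_n) : 'cV[R]_n :=
  \col_i (if sig1 i == g then w i 0 else 0).

Lemma submxcol_blk_mask g h w :
  submxcol (blk_mask g w) h = if h == g then submxcol w h else 0.
Proof.
apply/matrixP => k j; rewrite ord1 !mxE Rank1K.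
by case: eqP => _; rewrite !mxE.
Qed.

Lemma mulmx_blk_mask m (A : 'M[R]_(m, n)) g w :
  A *m blk_mask g w = submxrow A g *m submxcol w g.
Proof.
apply/matrixP => i j; rewrite ord1 !mxE.
rewrite (eq_bigr (fun k => if sig1 k == g then A i k * w k 0 else 0)).
  rewrite -big_mkcond sum_blk; apply: eq_bigr => k _; by rewrite !mxE.
by move=> k _; rewrite mxE; case: ifP; rewrite ?mulr0.
Qed.

Variable Q : 'M[R]_n.
Implicit Types z w : 'cV[R]_n.

Definition blk_sol (z : 'cV[R]_n) g : 'cV[R]_(l g) :=
  invmx (1%:M - submxblock Q g g) *m submxcol z g.

Definition blk_push (z : 'cV[R]_n) g : 'cV[R]_n := submxrow Q g *m blk_sol z g.

Definition residual_step (z : 'cV[R]_n) g : 'cV[R]_n :=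
  z + blk_push z g - blk_mask g (z + blk_push z g).

Lemma mxcol_blk_update z g : \mxcol_h blk_update Q z g h = blk_push z g.
Proof.
rewrite /blk_update /blk_push /blk_sol.
under eq_mxcol do rewrite -mulmxA.
by rewrite -mxcol_mul; under eq_mxcol do rewrite submxblockEh; rewrite submxcolK.
Qed.

Lemma estimate_updateE (x z : 'cV[R]_n) g :
  \mxcol_h (submxcol x h + blk_update Q z g h) = x + blk_push z g.
Proof. by rewrite mxcolD submxcolK mxcol_blk_update. Qed.

Lemma residual_updateE (z : 'cV[R]_n) g :
  \mxcol_h (if h == g then 0 else submxcol z h + blk_update Q z g h) =
  residual_step z g.
Proof.
apply/mxcolP => h; rewrite mxcolK submxcolB submxcol_blk_mask.
case: eqP => [-> | _]; first by rewrite subrr.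
by rewrite subr0 submxcolD -mxcol_blk_update mxcolK.
Qed.

Variable c : R.
Hypothesis Q_ge0 : forall i j, 0 <= Q i j.
Hypothesis Q_colsum : forall j, \sum_i Q i j <= c.
Hypothesis c_lt1 : c < 1.

Lemma submxblock_ge0 g h i j : 0 <= submxblock Q g h i j.
Proof. by rewrite mxE. Qed.

Lemma submxblock_colsum g j : \sum_i submxblock Q g g i j <= c.
Proof.
under eq_bigr do rewrite mxE.
by apply: le_trans (Q_colsum _); apply: sum_blk_le.
Qed.

Lemma blk_sol_fix z g :
  blk_sol z g = submxcol z g + submxblock Q g g *m blk_sol z g.
Proof.
apply/eqP; rewrite -subr_eq -{1}[blk_sol z g]mul1mx -mulmxBl /blk_sol.
have blk_unit := unitmx_1B (@submxblock_ge0 g g) (@submxblock_colsum g) c_lt1.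
by rewrite mulmxA mulmxV ?mul1mx.
Qed.

Lemma blk_sol_ge0 z g : (forall i, 0 <= z i 0) -> forall k, 0 <= blk_sol z g k 0.
Proof.
move=> z_ge0; apply: (invmx_1B_ge0 (@submxblock_ge0 g g) (@submxblock_colsum g)).
  exact: c_lt1.
by move=> k; rewrite mxE.
Qed.

Lemma blk_push_ge0 z g : (forall i, 0 <= z i 0) -> forall i, 0 <= blk_push z g i 0.
Proof.
move=> z_ge0 i; rewrite mxE; apply: sumr_ge0 => k _.
by rewrite mxE mulr_ge0 // blk_sol_ge0.
Qed.

(* On block g, z + blk_push z g is blk_sol z g, by blk_sol_fix. *)
Lemma mulmx_blk_mask_push z g : Q *m blk_mask g (z + blk_push z g) = blk_push z g.
Proof.
rewrite mulmx_blk_mask submxcolD -{1}mxcol_blk_update mxcolK.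
by rewrite /blk_update -mulmxA -/(blk_sol z g) -blk_sol_fix.
Qed.

Lemma residual_stepE z g i :
  residual_step z g i 0 = if sig1 i == g then 0 else z i 0 + blk_push z g i 0.
Proof. by rewrite !mxE; case: ifP => _; rewrite ?subrr ?subr0 // mxE. Qed.

Lemma residual_step_ge0 z g : (forall i, 0 <= z i 0) ->
  forall i, 0 <= residual_step z g i 0.
Proof.
move=> z_ge0 i; rewrite residual_stepE; case: ifP => // _.
by rewrite addr_ge0 // blk_push_ge0.
Qed.

Lemma sum_residual_step_le z g : (forall i, 0 <= z i 0) ->
  \sum_i residual_step z g i 0 <=
  \sum_i z i 0 - (1 - c) * \sum_(i | sig1 i == g) z i 0.
Proof.
move=> z_ge0; set w := z + blk_push z g.
have w_ge0 i : 0 <= w i 0 by rewrite mxE addr_ge0 // blk_push_ge0.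
have mask_ge0 i : 0 <= blk_mask g w i 0 by rewrite mxE; case: ifP.
have push_le : \sum_i blk_push z g i 0 <= c * \sum_i blk_mask g w i 0.
  by rewrite -{1}(mulmx_blk_mask_push z g); apply: sum_mulmx_le.
have blk_le : \sum_(i | sig1 i == g) z i 0 <= \sum_i blk_mask g w i 0.
  rewrite big_mkcond /=; apply: ler_sum => i _; rewrite mxE.
  by case: ifP => // _; rewrite mxE lerDl blk_push_ge0.
have -> : \sum_i residual_step z g i 0 =
          \sum_i z i 0 + \sum_i blk_push z g i 0 - \sum_i blk_mask g w i 0.
  by rewrite -big_split -sumrB; apply: eq_bigr => i _; rewrite !mxE.
have : 0 <= 1 - c by rewrite subr_ge0 ltW.
nra.
Qed.

Lemma residual_step_invariant (xs x z : 'cV[R]_n) g :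
  (1%:M - Q) *m (xs - x) = Q *m z ->
  (1%:M - Q) *m (xs - (x + blk_push z g)) = Q *m residual_step z g.
Proof.
move=> inv; rewrite opprD addrA mulmxBr inv /residual_step mulmxBr.
by rewrite mulmx_blk_mask_push mulmxDr mulmxBl mul1mx opprB addrA.
Qed.

Section Process.
Hypothesis c_gt0 : 0 < c.

Let c_ge0 : 0 <= c. Proof. exact: ltW. Qed.
Let subc_gt0 : 0 < 1 - c. Proof. by rewrite subr_gt0. Qed.
Let coef_ge0 : 0 <= c / (1 - c). Proof. by rewrite divr_ge0 // ltW. Qed.

Variables (psi : nat -> 'I_N) (x z : nat -> 'cV[R]_n) (xs : 'cV[R]_n).
Hypothesis x_step : forall k, x k.+1 = x k + blk_push (z k) (psi k).
Hypothesis z_step : forall k, z k.+1 = residual_step (z k) (psi k).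
Hypothesis z0_ge0 : forall i, 0 <= z 0%N i 0.
Hypothesis invariant0 : (1%:M - Q) *m (xs - x 0%N) = Q *m z 0%N.

Lemma residual_ge0 k i : 0 <= z k i 0.
Proof. by elim: k i => [|k IH] i //; rewrite z_step; apply: residual_step_ge0. Qed.

Lemma invariant k : (1%:M - Q) *m (xs - x k) = Q *m z k.
Proof.
by elim: k => // k IH; rewrite x_step z_step; apply: residual_step_invariant.
Qed.

Definition mass k := \sum_i z k i 0.

Definition blk_mass k g := \sum_(i | sig1 i == g) z k i 0.

Lemma mass_ge0 k : 0 <= mass k.
Proof. by apply: sumr_ge0 => i _; apply: residual_ge0. Qed.

Lemma blk_mass_ge0 k g : 0 <= blk_mass k g.
Proof. by apply: sumr_ge0 => i _; apply: residual_ge0. Qed.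

Lemma mass_sum_blk k : mass k = \sum_g blk_mass k g.
Proof. exact: (partition_big sig1 xpredT). Qed.

Lemma estimate_err_le k : `|x k - xs| <= c / (1 - c) * mass k.
Proof.
rewrite -opprB normrN mulrAC ler_pdivlMr // mulrC.
apply: le_trans (sum_norm_1B_le Q_ge0 Q_colsum (invariant k) (@residual_ge0 k)).
by rewrite ler_pM2l // normr_le_sum_cV.
Qed.

Lemma mass_step k : mass k.+1 <= mass k - (1 - c) * blk_mass k (psi k).
Proof. by rewrite /mass z_step; apply/sum_residual_step_le/residual_ge0. Qed.

Lemma mass_nonincreasing : nonincreasing_seq mass.
Proof.
apply/nonincreasing_seqP => k; apply: le_trans (mass_step k) _.
by rewrite gerBl mulr_ge0 ?blk_mass_ge0 ?ltW.
Qed.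

Fixpoint visited (K d : nat) : {set 'I_N} :=
  if d is d'.+1 then psi (K + d')%N |: visited K d' else finset.set0.

Lemma mem_visited K d j : (K <= j < K + d)%N -> psi j \in visited K d.
Proof.
elim: d => [|d IH] j_in; first by rewrite addn0 in j_in; lia.
rewrite /= in_setU1; have [->|j_neq] := eqVneq j (K + d)%N; first by rewrite eqxx.
apply/orP; right; apply: IH; move: j_in j_neq; rewrite addnS; lia.
Qed.

Lemma visited_setT K d :
  (forall g, exists j, (K <= j < K + d)%N /\ psi j = g) -> visited K d = [set: 'I_N].
Proof.
move=> cover; apply/setP => g; rewrite inE.
by have [j [j_in <-]] := cover g; apply: mem_visited.
Qed.

Lemma residual_unvisited K d i :
  sig1 i \notin visited K d -> z K i 0 <= z (K + d)%N i 0.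
Proof.
elim: d => [|d IH]; first by rewrite addn0.
rewrite /= in_setU1 negb_or => /andP[i_new /IH z_le]; apply: le_trans z_le _.
rewrite addnS z_step residual_stepE (negbTE i_new) lerDl.
by apply: blk_push_ge0 => j; apply: residual_ge0.
Qed.

(* A block visited in the window is charged at its first visit, when its
   residual still dominates the one at time K. *)
Lemma mass_window K d :
  mass (K + d)%N <= mass K - (1 - c) * \sum_(g in visited K d) blk_mass K g.
Proof.
have c1_ge0 := ltW subc_gt0.
elim: d => [|d IH]; first by rewrite addn0 big_set0 mulr0 subr0.
rewrite addnS /=; apply: le_trans (mass_step _) _.
set g := psi (K + d)%N; have [g_old | g_new] := boolP (g \in visited K d).
  have -> : g |: visited K d = visited K d.
    by apply/finset.setUidPr; rewrite finset.sub1set.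
  have := mulr_ge0 c1_ge0 (blk_mass_ge0 (K + d)%N g); lra.
have blk_le : blk_mass K g <= blk_mass (K + d)%N g.
  apply: ler_sum => i /eqP i_g; apply: residual_unvisited; by rewrite i_g.
rewrite big_setU1 //=; have := ler_wpM2l c1_ge0 blk_le; lra.
Qed.

Lemma mass_full_window K d : visited K d = [set: 'I_N] -> mass (K + d)%N <= c * mass K.
Proof.
move=> full; have := mass_window K d.
rewrite full (eq_bigl xpredT) => [|g]; last by rewrite inE.
by rewrite -mass_sum_blk; lra.
Qed.

Section Recurrent.
Hypothesis psi_inf : forall g K, exists k, (K <= k)%N /\ psi k = g.

Lemma exists_full_window K : exists d, visited K d = [set: 'I_N].
Proof.
have /fin_all_exists[f f_spec] g : exists k, (K <= k)%N /\ psi k = g.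
  exact: psi_inf.
exists (\max_g (f g - K).+1)%N; apply: visited_setT => g; exists (f g).
have [K_le psi_fg] := f_spec g; split => //.
have := leq_bigmax (F := fun g => (f g - K).+1) g; lia.
Qed.

Lemma mass_geometric p : exists K, mass K <= c ^+ p * mass 0%N.
Proof.
elim: p => [|p [K mass_K]]; first by exists 0%N; rewrite expr0 mul1r.
have [d full] := exists_full_window K.
exists (K + d)%N; apply: le_trans (mass_full_window full) _.
by rewrite exprS -mulrA ler_wpM2l.
Qed.

Lemma estimate_cvg : (x @ \oo --> xs)%classic.
Proof.
apply: (@cvg_nonincreasing_bound _ _ _ _ (fun k => c / (1 - c) * mass k)).
- by move=> k k' le_kk'; apply: ler_wpM2l => //; apply: mass_nonincreasing.
- move=> e e_gt0; have c01 : 0 <= c < 1 by rewrite c_lt1 c_ge0.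
  have [p p_le] := exists_expr_mul_le (c / (1 - c) * mass 0%N) c01 e_gt0.
  have [K mass_K] := mass_geometric p; exists K.
  by apply: le_trans p_le; rewrite mulrCA; apply: ler_wpM2l.
- exact: estimate_err_le.
Qed.

End Recurrent.

Section Periodic.
Variable T : nat.
Hypothesis T_gt0 : (0 < T)%N.
Hypothesis psi_T : forall k g, exists j, (k <= j < k + T)%N /\ psi j = g.

Lemma mass_periodic k : mass k <= c ^+ (k %/ T) * mass 0%N.
Proof.
have mass_mulT p : mass (p * T)%N <= c ^+ p * mass 0%N.
  elim: p => [|p IH]; first by rewrite mul0n expr0 mul1r.
  rewrite mulSn addnC.
  apply: le_trans (mass_full_window (visited_setT (psi_T _))) _.
  by rewrite exprS -mulrA ler_wpM2l.
by apply: le_trans (mass_mulT _); apply: mass_nonincreasing; rewrite leq_divM.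
Qed.

Lemma estimate_geometric :
  exists C rho : R, 0 < C /\ 0 < rho < 1 /\ forall k, `|x k - xs| <= C * rho ^+ k.
Proof.
have c01 : 0 < c < 1 by rewrite c_gt0 c_lt1.
have [rho /andP[rho_gt0 rho_lt1] c_le] := exists_root_ge c01 T_gt0.
have rho_ge0 := ltW rho_gt0.
set C0 := c / (1 - c) * mass 0%N / rho ^+ T.
have C0_ge0 : 0 <= C0 by rewrite divr_ge0 ?exprn_ge0 // mulr_ge0 // mass_ge0.
exists (C0 + 1), rho; split; first lra; split; first by rewrite rho_gt0.
move=> k; apply: le_trans (estimate_err_le k) _.
apply: le_trans (_ : C0 * rho ^+ k <= _); last by rewrite ler_pM2r ?exprn_gt0 // lerDl.
have pow_le : c ^+ (k %/ T) <= rho ^+ k / rho ^+ T.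
  rewrite ler_pdivlMr ?exprn_gt0 //; apply: expr_divn_le => //.
  by rewrite rho_gt0 ltW.
apply: le_trans (ler_wpM2l coef_ge0 (mass_periodic k)) _.
have -> : C0 * rho ^+ k = c / (1 - c) * (rho ^+ k / rho ^+ T * mass 0%N).
  by rewrite /C0; ring.
by apply: ler_wpM2l => //; apply: ler_wpM2r => //; apply: mass_ge0.
Qed.

End Periodic.

End Process.

End Blocks.

Lemma hyperlink_ge0 (R : realType) n (E : rel 'I_n) i j : 0 <= hyperlink R E i j.
Proof. by rewrite mxE; case: ifP => // _; rewrite invr_ge0 ler0n. Qed.

Lemma hyperlink_colsum (R : realType) n (E : rel 'I_n) j :
  (0 < outdeg E j)%N -> \sum_i hyperlink R E i j = 1.
Proof.
move=> outdeg_gt0; under eq_bigr do rewrite mxE.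
rewrite -big_mkcond /= sumr_const.
have -> : #|[pred i | E j i]| = outdeg E j by apply: eq_card => i; rewrite inE.
by rewrite -[_ *+ _]mulr_natr mulVf // pnatr_eq0 -lt0n.
Qed.

Local Open Scope classical_set_scope.
Local Open Scope ring_scope.


Theorem proposition2 (R : realType) (N : nat) (l : 'I_N -> nat)
    (E : rel 'I_(\sum_(h < N) l h)) (m : R)
    (xstar : 'cV[R]_(\sum_(h < N) l h))
    (psi : nat -> 'I_N)
    (x z : nat -> 'cV[R]_(\sum_(h < N) l h)) :
  (2 <= \sum_(h < N) l h)%N ->
  (forall h, (0 < l h)%N) ->
  (forall j, (0 < outdeg E j)%N) ->
  0 < m < 1 ->
  is_pagerank E m xstar ->
  (forall h (K : nat), exists k : nat, (K <= k)%N /\ psi k = h) ->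
  x 0%N = const_mx (m / (\sum_(h < N) l h)%:R) ->
  z 0%N = const_mx (m / (\sum_(h < N) l h)%:R) ->
  (forall k : nat,
     x k.+1 = \mxcol_h (submxcol (x k) h
                + blk_update ((1 - m) *: hyperlink R E) (z k) (psi k) h)) ->
  (forall k : nat,
     z k.+1 = \mxcol_h (if h == psi k then 0
                else submxcol (z k) h
                     + blk_update ((1 - m) *: hyperlink R E) (z k) (psi k) h)) ->
  (x @ \oo --> xstar) /\
  ((exists T : nat, (0 < T)%N /\
      forall (k : nat) (h : 'I_N), exists j : nat, (k <= j < k + T)%N /\ psi j = h) ->
   exists C rho : R, 0 < C /\ 0 < rho < 1 /\
     forall k : nat, `|x k - xstar| <= C * rho ^+ k).
Proof.
move=> _ _ outdeg_gt0 /andP[m_gt0 m_lt1] [xstar_fix _] psi_inf x0 z0 x_upd z_upd.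
set Q := (1 - m) *: hyperlink R E.
have Q_ge0 i j : 0 <= Q i j by rewrite mxE mulr_ge0 ?hyperlink_ge0 // subr_ge0 ltW.
have Q_colsum j : \sum_i Q i j <= 1 - m.
  by under eq_bigr do rewrite mxE; rewrite -mulr_sumr hyperlink_colsum ?mulr1.
have c_lt1 : 1 - m < 1 by lra.
have c_gt0 : 0 < 1 - m by lra.
have x_step k : x k.+1 = x k + blk_push Q (z k) (psi k).
  by rewrite x_upd estimate_updateE.
have z_step k : z k.+1 = residual_step Q (z k) (psi k).
  by rewrite z_upd residual_updateE.
have z0_ge0 i : 0 <= z 0%N i 0 by rewrite z0 mxE divr_ge0 ?ler0n // ltW.
have invariant0 : (1%:M - Q) *m (xstar - x 0%N) = Q *m z 0%N.
  have xstar_fixQ : xstar = Q *m xstar + z 0%N by rewrite z0 -scalemxAl.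
  rewrite x0 -z0 mulmxBr !mulmxBl !mul1mx {1}xstar_fixQ.
  by rewrite [Q *m xstar + _]addrC addrK opprB addrC subrK.
split=> [|[T [T_gt0 psi_T]]].
  exact (estimate_cvg Q_ge0 Q_colsum c_lt1 c_gt0 x_step z_step z0_ge0
           invariant0 psi_inf).
exact (estimate_geometric Q_ge0 Q_colsum c_lt1 c_gt0 x_step z_step z0_ge0
         invariant0 T_gt0 psi_T).
Qed.
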